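(* Let $X_1,\dots,X_n$ be Polish spaces, $1\le k<n$, and $\mu_\alpha\in\mathcal{P}(X_\alpha)$ for $\alpha\in\mathcal{I}_{nk}$. Let $A\subseteq X$ be a measurable set with $\mathrm{sth}(A)=0$. Then there exist measurable sets $Y_\alpha\subseteq X_\alpha$, $\alpha\in\mathcal{I}_{nk}$, with $\mu_\alpha(Y_\alpha)=0$ for all $\alpha$ and $A\subseteq\bigcup_{\alpha\in\mathcal{I}_{nk}}\mathrm{Pr}_\alpha^{-1}(Y_\alpha)$.
   Context: $X=\prod_iX_i$; $\mathcal{I}_{nk}$ is the family of $k$-element subsets of $\{1,\dots,n\}$; $X_\alpha=\prod_{i\in\alpha}X_i$, $\mathrm{Pr}_\alpha:X\to X_\alpha$ the projection. The proper $(n,k)$-thickness of a measurable $A\subseteq X$ is $\mathrm{sth}(A)=\inf\{\sum_{\alpha\in\mathcal{I}_{nk}}\mu_\alpha(Y_\alpha):\ Y_\alpha\subseteq X_\alpha\text{ measurable},\ A\subseteq\bigcup_{\alpha\in\mathcal{I}_{nk}}\mathrm{Pr}_\alpha^{-1}(Y_\alpha)\}$. *)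

From HB Require Import structures.
From mathcomp Require Import all_boot all_order all_algebra.
From mathcomp Require Import all_classical all_reals all_analysis.

Set Implicit Arguments.
Unset Strict Implicit.
Unset Printing Implicit Defensive.
Import Order.TTheory GRing.Theory Num.Theory.
Local Open Scope classical_set_scope.
Local Open Scope ring_scope.

Definition is_metric (R : realType) (T : Type) (d : T -> T -> R) : Prop :=
  [/\ forall x y, 0 <= d x y,
      forall x y, d x y = 0 <-> x = y,
      forall x y, d x y = d y x &
      forall x y z, d x z <= d x y + d y z].

Definition metric_induces (R : realType) (T : topologicalType)
  (d : T -> T -> R) : Prop :=
  forall U : set T, open U <->
    (forall x, U x -> exists2 e : R, 0 < e & [set y | d x y < e] `<=` U).

Definition metric_complete (R : realType) (T : Type) (d : T -> T -> R) : Prop :=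
  forall u : nat -> T,
    (forall e : R, 0 < e -> exists N : nat, forall m p : nat,
        (N <= m)%N -> (N <= p)%N -> d (u m) (u p) < e) ->
    exists l : T, forall e : R, 0 < e ->
      exists N : nat, forall m : nat, (N <= m)%N -> d (u m) l < e.

Definition polish (R : realType) (T : topologicalType) : Prop :=
  (exists D : set T, countable D /\ closure D = [set: T]) /\
  (exists d : T -> T -> R,
      [/\ is_metric d, metric_induces d & metric_complete d]).

Definition borel_sets (T : topologicalType) : set (set T) := <<s open >>.

Section Products.
Local Unset Implicit Arguments.
Variables (n : nat) (T : 'I_n -> ptopologicalType).

Definition Xa (alpha : {set 'I_n}) : Type :=
  forall j : {i : 'I_n | i \in alpha}, T (sval j).

Definition Xall : Type := forall i : 'I_n, T i.

(* generators of the product sigma-algebra on X_alpha: cylinders over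
   Borel sets of one coordinate *)
Definition cylA (alpha : {set 'I_n}) : set (set (Xa alpha)) :=
  [set C | exists (j : {i : 'I_n | i \in alpha}) (B : set (T (sval j))),
      borel_sets B /\ C = (fun x : Xa alpha => x j) @^-1` B].

Definition cylX : set (set Xall) :=
  [set C | exists (i : 'I_n) (B : set (T i)),
      borel_sets B /\ C = (fun x : Xall => x i) @^-1` B].

Definition Prj (alpha : {set 'I_n}) (x : Xall) : Xa alpha :=
  fun j => x (sval j).

Definition sth (R : realType) (k : nat)
  (mu : forall alpha : {set 'I_n}, probability (g_sigma_algebraType (cylA alpha)) R)
  (A : set Xall) : \bar R :=
  ereal_inf [set (\sum_(alpha : {set 'I_n} | #|alpha| == k) mu alpha (Y alpha))%E
            | Y in [set Y : forall alpha : {set 'I_n}, set (Xa alpha) |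
                 (forall alpha : {set 'I_n}, #|alpha| = k -> <<s cylA alpha >> (Y alpha)) /\
                 A `<=` bigcup [set alpha : {set 'I_n} | #|alpha| = k]
                          (fun alpha => Prj alpha @^-1` Y alpha)]].
End Products.
Arguments Xa {n} T alpha.
Arguments Xall {n} T.
Arguments cylA {n} T alpha.
Arguments cylX {n} T.
Arguments Prj {n T} alpha x.
Arguments sth {n T R} k mu A.

From HB Require Import structures.
From mathcomp Require Import all_boot all_order all_algebra.
From mathcomp Require Import all_classical all_reals all_analysis.
Import Order.TTheory GRing.Theory Num.Theory.
Local Open Scope classical_set_scope.
Local Open Scope ring_scope.

(* If the proper (n,k)-thickness of A is 0, then for every m there is an
   admissible cover (Y_m alpha)_alpha of A with total mass below 2^-(m+1).
   In particular mu_alpha(Y_m alpha) <= 2^-(m+1) for each alpha, so the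
   series sum_m mu_alpha(Y_m alpha) converges, and by Borel-Cantelli the set
   Y alpha := limsup_m Y_m alpha is mu_alpha-null; it is measurable as a
   countable intersection of countable unions.  It still covers A: for x in A,
   pick for each m an alpha_m with Pr_alpha_m x in Y_m alpha_m; since there
   are finitely many alpha, one of them occurs infinitely often, and then
   Pr_alpha x lies in limsup_m Y_m alpha. *)

Lemma finite_valued_seq_recurrent {I : finType} (a : nat -> I) :
  exists i : I, forall N, exists2 m, (N <= m)%N & a m = i.
Proof.
apply: contrapT => /forallNP never_recurs.
have eventually_avoids (i : I) : exists N, forall m, (N <= m)%N -> a m != i.
  have /existsNP [N HN] := never_recurs i; exists N => m Nm.
  by apply/eqP => ami; apply: HN; exists m.
have [N HN] := choice eventually_avoids.
have := HN (a (\max_(i : I) N i)%N) _ (leq_bigmax _).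
by rewrite eqxx.
Qed.

Section LimSupNull.
Context {d} {X : measurableType d} {R : realType}.

Lemma measurable_lim_sup_set (F : (set X)^nat) :
  (forall m, measurable (F m)) -> measurable (lim_sup_set F).
Proof.
move=> mF; apply: bigcap_measurable; first by exists 0%N.
by move=> N _; apply: bigcup_measurable => m _; exact: mF.
Qed.

Lemma lim_sup_set_geometric_null (mu : {measure set X -> \bar R})
    (F : (set X)^nat) :
  (forall m, measurable (F m)) ->
  (forall m, mu (F m) <= (1 / (2 ^ m.+1)%:R)%:E)%E ->
  mu (lim_sup_set F) = 0%E.
Proof.
move=> mF muF; apply: lim_sup_set_cvg0 => //.
apply: (@le_lt_trans _ _ 1%:E); last exact: ltry.
apply: le_trans (epsilon_trick0 xpredT ler01).
apply: lee_nneseries => [m _ _|m _]; [exact: measure_ge0 | exact: muF].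
Qed.

End LimSupNull.

Lemma lim_sup_cover (I : finType) (S : set I) (U : Type) (Z : I -> Type)
    (p : forall i, U -> Z i) (Y : nat -> forall i, set (Z i)) (A : set U) :
  (forall m, A `<=` \bigcup_(i in S) p i @^-1` Y m i) ->
  A `<=` \bigcup_(i in S) p i @^-1` lim_sup_set (fun m => Y m i).
Proof.
move=> coverY x Ax.
have witness m : exists i, S i /\ Y m i (p i x).
  by have [i Si Yi] := coverY m x Ax; exists i.
have [i_ Hi_] := choice witness.
have [i i_recurs] := finite_valued_seq_recurrent i_.
have [m0 _ i_m0] := i_recurs 0%N.
exists i; first by have [] := Hi_ m0; rewrite i_m0.
move=> N _ /=; have [m Nm i_m] := i_recurs N.
by exists m => //; have [_] := Hi_ m; rewrite i_m.
Qed.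

Section SmallCovers.
Context (R : realType) (n k : nat) (T : 'I_n -> ptopologicalType).
Variable mu : forall alpha : {set 'I_n},
  probability (g_sigma_algebraType (cylA T alpha)) R.

Definition admissible_cover (A : set (Xall T))
    (Y : forall alpha : {set 'I_n}, set (Xa T alpha)) : Prop :=
  (forall alpha : {set 'I_n}, #|alpha| = k -> <<s cylA T alpha >> (Y alpha)) /\
  A `<=` bigcup [set alpha : {set 'I_n} | #|alpha| = k]
           (fun alpha => Prj alpha @^-1` Y alpha).

Lemma sth_lt_cover (A : set (Xall T)) (e : \bar R) :
  (sth k mu A < e)%E -> exists Y, admissible_cover A Y /\
    (\sum_(alpha : {set 'I_n} | #|alpha| == k) mu alpha (Y alpha) < e)%E.
Proof. by move/ereal_inf_lt => [_ [Y HY <-] He]; exists Y. Qed.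

Lemma cover_term_le_cost (Y : forall alpha : {set 'I_n}, set (Xa T alpha))
    (beta : {set 'I_n}) : #|beta| = k ->
  (mu beta (Y beta) <=
   \sum_(alpha : {set 'I_n} | #|alpha| == k) mu alpha (Y alpha))%E.
Proof.
move=> beta_k; rewrite (bigD1 beta) /=; last by rewrite beta_k.
by apply: leeDl; apply: sume_ge0 => alpha _; exact: measure_ge0.
Qed.

End SmallCovers.
Arguments admissible_cover {n} k {T} A Y.
Arguments sth_lt_cover {R n k T mu A e}.
Arguments cover_term_le_cost {R n k T} mu Y {beta}.

Theorem mainTheorem11 (R : realType) (n k : nat) (T : 'I_n -> ptopologicalType)
  (hpolish : forall i, polish R (T i))
  (hk1 : (1 <= k)%N) (hkn : (k < n)%N)
  (mu : forall alpha : {set 'I_n}, probability (g_sigma_algebraType (cylA T alpha)) R)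
  (A : set (Xall T)) (hA : <<s cylX T >> A)
  (h0 : sth k mu A = 0%E) :
  exists Y : forall alpha : {set 'I_n}, set (Xa T alpha),
    (forall alpha : {set 'I_n}, #|alpha| = k ->
       <<s cylA T alpha >> (Y alpha) /\ mu alpha (Y alpha) = 0%E) /\
    A `<=` bigcup [set alpha : {set 'I_n} | #|alpha| = k]
             (fun alpha => Prj alpha @^-1` Y alpha).
Proof.
have small_cover m : exists Y, admissible_cover k A Y /\
    (\sum_(alpha : {set 'I_n} | #|alpha| == k) mu alpha (Y alpha)
       < (1 / (2 ^ m.+1)%:R)%:E)%E.
  by apply: sth_lt_cover; rewrite h0 lte_fin divr_gt0 // ltr0n expn_gt0.
have [Ys HYs] := choice small_cover.
exists (fun alpha => lim_sup_set (fun m => Ys m alpha)); split; last first.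
  by apply: lim_sup_cover => m; have [[_]] := HYs m.
move=> alpha alpha_k.
have mYs m : measurable (Ys m alpha : set (g_sigma_algebraType (cylA T alpha))).
  by have [[mY _] _] := HYs m; exact: mY.
split.
  change (measurable (lim_sup_set
    (fun m => Ys m alpha : set (g_sigma_algebraType (cylA T alpha))))).
  exact: measurable_lim_sup_set.
apply: lim_sup_set_geometric_null => // m.
have [_ cost_small] := HYs m.
exact: le_trans (cover_term_le_cost _ _ alpha_k) (ltW cost_small).
Qed.
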